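(* Let $X$ be a topological space and $M$ a maximal ideal of $B_1(X)$. The following are equivalent: (1) $M$ is real; (2) $Z_B[M]$ is closed under countable intersections; (3) $Z_B[M]$ has the countable intersection property (every countable subfamily has nonempty intersection).
   Context: For a topological space $X$, $B_1(X)$ denotes the lattice-ordered ring (pointwise operations and order) of all Baire one functions $f:X\to\mathbb{R}$, i.e. pointwise limits of sequences of continuous real-valued functions. For $f$, $Z(f)=\{x: f(x)=0\}$; for an ideal $I$, $Z_B[I]=\{Z(f): f\in I\}$. For a maximal ideal $M$, $M(f)=f+M$; $B_1(X)/M$ is a totally ordered field and $\Phi:\mathbb{R}\to B_1(X)/M$, $\Phi(r)=M(\mathbf r)$ ($\mathbf r$ the constant function $r$), is an order-preserving embedding. $M$ is real if $\Phi(\mathbb{R})=B_1(X)/M$, and hyper-real otherwise. *)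

From Stdlib Require Import Reals.
Open Scope R_scope.

Record topology (X : Type) := {
  is_open : (X -> Prop) -> Prop;
  open_full : is_open (fun _ => True);
  open_inter : forall U V, is_open U -> is_open V ->
                 is_open (fun x => U x /\ V x);
  open_union : forall F : (X -> Prop) -> Prop,
                 (forall U, F U -> is_open U) ->
                 is_open (fun x => exists U, F U /\ U x)
}.
Arguments is_open {X} _ _.

Definition R_open (V : R -> Prop) : Prop :=
  forall y, V y -> exists eps, 0 < eps /\ forall z, Rabs (z - y) < eps -> V z.

Definition continuous_on {X : Type} (T : topology X) (f : X -> R) : Prop :=
  forall V, R_open V -> is_open T (fun x => V (f x)).

Definition Baire_one {X : Type} (T : topology X) (f : X -> R) : Prop :=
  exists fn : nat -> X -> R,
    (forall n, continuous_on T (fn n)) /\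
    (forall x, Un_cv (fun n => fn n x) (f x)).

Definition B1_ideal {X : Type} (T : topology X) (I : (X -> R) -> Prop) : Prop :=
  (forall f, I f -> Baire_one T f) /\
  I (fun _ => 0) /\
  (forall f g, I f -> I g -> I (fun x => f x + g x)) /\
  (forall f g, Baire_one T g -> I f -> I (fun x => g x * f x)).

Definition B1_maximal_ideal {X : Type} (T : topology X) (M : (X -> R) -> Prop) : Prop :=
  B1_ideal T M /\
  ~ M (fun _ => 1) /\
  (forall J, B1_ideal T J -> (forall f, M f -> J f) ->
     (forall f, J f -> M f) \/ J (fun _ => 1)).

(* M is real: Phi(R) = B_1(X)/M, i.e. every coset f + M is r + M for a constant r. *)
Definition real_ideal {X : Type} (T : topology X) (M : (X -> R) -> Prop) : Prop :=
  forall f, Baire_one T f -> exists r : R, M (fun x => f x - r).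

Definition Zset {X : Type} (f : X -> R) : X -> Prop := fun x => f x = 0.

Definition ZB {X : Type} (I : (X -> R) -> Prop) (Z : X -> Prop) : Prop :=
  exists f, I f /\ forall x, Z x <-> Zset f x.

Definition ZB_closed_countable_inter {X : Type} (I : (X -> R) -> Prop) : Prop :=
  forall Zs : nat -> X -> Prop, (forall n, ZB I (Zs n)) ->
    ZB I (fun x => forall n, Zs n x).

(* Countable intersection property (finite subfamilies covered by repetition). *)
Definition ZB_countable_inter_prop {X : Type} (I : (X -> R) -> Prop) : Prop :=
  forall Zs : nat -> X -> Prop, (forall n, ZB I (Zs n)) ->
    exists x, forall n, Zs n x.

(* The proof goes around the cycle (1) => (3) => (2) => (3) => (1).
   - Analysis: Baire one functions are closed under sums, products, continuous
     post-composition and reciprocals of nowhere vanishing functions, and a sequence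
     [fn] of Baire one functions is encoded by the Baire one function
     [tseries fn = sum_n 2^-n min(|fn|, 1)], whose zero set is the intersection of the
     zero sets of the [fn].
   - Algebra of M: every [f] outside M satisfies [m + h f = 1] with [m] in M; hence
     M is prime, every function of M has a zero, and [Z_B[M]] is a z-ultrafilter:
     a Baire one [f] whose zero set meets every zero set of M lies in M.
   - (1) => (3): if [tseries fn - r] is in M, finite intersections force [r = 0].
     (3) => (2): [Z(tseries fn)] meets every zero set of M, so [tseries fn] is in M.
     (3) => (1): for [f] in B_1(X), primeness splits X at each level [r] into
     [{f >= r}] or [{f <= r}] in [Z_B[M]]; the supremum [a] of the first kind of
     levels gives [{f = a}] as a countable intersection, so [f - a] is in M. *)

From Stdlib Require Import Arith Reals Lra Lia Classical ClassicalEpsilon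
  FunctionalExtensionality PropExtensionality.
Open Scope R_scope.

Lemma lipschitz_continuity_pt (phi : R -> R) y :
  (forall a b, Rabs (phi a - phi b) <= Rabs (a - b)) -> continuity_pt phi y.
Proof.
  intros Hphi eps Heps. exists eps; split; [exact Heps|].
  intros z [_ Hz]. simpl in *. unfold Rdist in *.
  pose proof (Hphi z y). lra.
Qed.

Lemma continuity_pt_eps (phi : R -> R) y : continuity_pt phi y ->
  forall eps, 0 < eps ->
  exists d, 0 < d /\ forall z, Rabs (z - y) < d -> Rabs (phi z - phi y) < eps.
Proof.
  intros Hphi eps Heps. destruct (Hphi eps Heps) as [d [Hd Hz]].
  exists d; split; [lra|]. intros z Hzy. destruct (Req_dec z y) as [->|Hne].
  - unfold Rminus; rewrite Rplus_opp_r, Rabs_R0; lra.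
  - apply (Hz z). split; [split; [exact I | auto] | exact Hzy].
Qed.

Lemma half_pow_pos n : 0 < (/2)^n.
Proof. apply pow_lt; lra. Qed.

Lemma half_pow_small y : 0 < y -> exists k, (/2)^k < y.
Proof.
  intro Hy. destruct (pow_lt_1_zero (/2)) with (y := y) as [k Hk];
    [rewrite Rabs_right; lra | exact Hy |].
  exists k. specialize (Hk k (le_n _)).
  rewrite Rabs_right in Hk by (left; apply half_pow_pos). exact Hk.
Qed.

Lemma le_half_pows r : (forall k, r <= (/2)^k) -> r <= 0.
Proof.
  intro Hr. destruct (Rle_dec r 0) as [|Hpos]; [assumption|].
  destruct (half_pow_small r) as [k Hk]; [lra|]. specialize (Hr k). lra.
Qed.

Lemma sqsum_zero a b : a * a + b * b = 0 <-> a = 0 /\ b = 0.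
Proof. split; [intro; nra | intros [-> ->]; ring]. Qed.

Lemma Rmin_0_zero y : Rmin y 0 = 0 <-> 0 <= y.
Proof. unfold Rmin; destruct Rle_dec; split; intro; lra. Qed.

Lemma Rmax_0_zero y : Rmax y 0 = 0 <-> y <= 0.
Proof. unfold Rmax; destruct Rle_dec; split; intro; lra. Qed.

Lemma Rmin_Rmax_0_mult y : Rmin y 0 * Rmax y 0 = 0.
Proof. unfold Rmin, Rmax; destruct Rle_dec; ring. Qed.

Section Continuity.
Variables (X : Type) (T : topology X).

Lemma open_ext (U V : X -> Prop) : is_open T U -> (forall x, U x <-> V x) -> is_open T V.
Proof.
  intros HU HUV. replace V with U; [exact HU|].
  apply functional_extensionality; intro x; apply propositional_extensionality; auto.
Qed.

Lemma open_local (S : X -> Prop) :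
  (forall x, S x -> exists U, is_open T U /\ U x /\ forall y, U y -> S y) -> is_open T S.
Proof.
  intro HS.
  apply (open_ext (fun x => exists U, (is_open T U /\ forall y, U y -> S y) /\ U x)).
  - apply open_union. intros U [HU _]; exact HU.
  - intro x; split.
    + intros [U [[_ HUS] HUx]]; auto.
    + intro Sx. destruct (HS x Sx) as [U [HU [HUx HUS]]]. exists U; auto.
Qed.

Lemma ball_R_open c e : R_open (fun z => Rabs (z - c) < e).
Proof.
  intros y Hy. exists (e - Rabs (y - c)). split; [lra|].
  intros z Hz. replace (z - c) with ((z - y) + (y - c)) by ring.
  pose proof (Rabs_triang (z - y) (y - c)). lra.
Qed.

Lemma continuous_const c : continuous_on T (fun _ => c).
Proof.
  intros V HV. apply open_local. intros x Hx. exists (fun _ => True).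
  split; [apply open_full | auto].
Qed.

Lemma continuous_plus f g : continuous_on T f -> continuous_on T g ->
  continuous_on T (fun x => f x + g x).
Proof.
  intros Hf Hg V HV. apply open_local. intros x Hx.
  destruct (HV _ Hx) as [eps [Heps Hball]].
  exists (fun y => Rabs (f y - f x) < eps/2 /\ Rabs (g y - g x) < eps/2).
  split; [apply open_inter;
          [apply (Hf (fun z => Rabs (z - f x) < eps/2)) |
           apply (Hg (fun z => Rabs (z - g x) < eps/2))]; apply ball_R_open|].
  split.
  - unfold Rminus; rewrite !Rplus_opp_r, Rabs_R0; lra.
  - intros y [Hfy Hgy]. apply Hball.
    replace (f y + g y - (f x + g x)) with ((f y - f x) + (g y - g x)) by ring.
    pose proof (Rabs_triang (f y - f x) (g y - g x)). lra.
Qed.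

Lemma continuous_comp (phi : R -> R) f : (forall y, continuity_pt phi y) ->
  continuous_on T f -> continuous_on T (fun x => phi (f x)).
Proof.
  intros Hphi Hf V HV. apply (Hf (fun y => V (phi y))).
  intros y Hy. destruct (HV _ Hy) as [eps [Heps Hball]].
  destruct (continuity_pt_eps phi y (Hphi y) eps Heps) as [d [Hd Hz]].
  exists d; split; auto.
Qed.

Lemma continuous_sum (F : nat -> X -> R) : (forall n, continuous_on T (F n)) ->
  forall K, continuous_on T (fun x => sum_f_R0 (fun n => F n x) K).
Proof. intros HF K; induction K; simpl; auto using continuous_plus. Qed.

End Continuity.

Section BaireOne.
Variables (X : Type) (T : topology X).

Lemma B1_ext f g : Baire_one T f -> (forall x, f x = g x) -> Baire_one T g.
Proof.
  intros [fn [Hcont Hcv]] Hfg. exists fn; split; [exact Hcont|].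
  intro x; rewrite <- Hfg; auto.
Qed.

Lemma B1_const c : Baire_one T (fun _ => c).
Proof.
  exists (fun _ _ => c). split; [intros; apply continuous_const|].
  intros x eps Heps. exists O. intros n _. unfold Rdist, Rminus.
  rewrite Rplus_opp_r, Rabs_R0; lra.
Qed.

Lemma B1_plus f g : Baire_one T f -> Baire_one T g -> Baire_one T (fun x => f x + g x).
Proof.
  intros [fn [Hf Hfcv]] [gn [Hg Hgcv]]. exists (fun n x => fn n x + gn n x).
  split; [intro; apply continuous_plus; auto | intro x; apply CV_plus; auto].
Qed.

Lemma B1_comp (phi : R -> R) f : (forall y, continuity_pt phi y) -> Baire_one T f ->
  Baire_one T (fun x => phi (f x)).
Proof.
  intros Hphi [fn [Hf Hfcv]]. exists (fun n x => phi (fn n x)).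
  split; [intro; apply continuous_comp; auto | intro x; apply continuity_seq; auto].
Qed.

Lemma B1_minus f g : Baire_one T f -> Baire_one T g -> Baire_one T (fun x => f x - g x).
Proof.
  intros Hf Hg. apply (B1_ext (fun x => f x + (-1) * g x)); [|intro; ring].
  apply B1_plus; [exact Hf|]. apply (B1_comp (fun y => -1 * y)); [intro; reg | exact Hg].
Qed.

(* Products, by polarization: [f g = ((f + g)^2 - (f - g)^2) / 4]. *)
Lemma B1_mult f g : Baire_one T f -> Baire_one T g -> Baire_one T (fun x => f x * g x).
Proof.
  intros Hf Hg.
  assert (Hsq : forall h, Baire_one T h -> Baire_one T (fun x => h x * h x)).
  { intros h Hh. apply (B1_comp (fun y => y * y)); [intro; reg | exact Hh]. }
  apply (B1_ext (fun x => /4 * ((f x + g x) * (f x + g x) - (f x - g x) * (f x - g x))));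
    [|intro; field].
  apply (B1_comp (fun y => /4 * y)); [intro; reg|].
  apply B1_minus; apply Hsq; [apply B1_plus | apply B1_minus]; auto.
Qed.

(* Reciprocals of nowhere vanishing functions: if [hn -> h], then
   [hn / (hn^2 + 1/2^n)] is continuous and tends to [h / h^2 = 1/h]. *)
Lemma B1_inv h : (forall x, h x <> 0) -> Baire_one T h -> Baire_one T (fun x => / h x).
Proof.
  intros Hnz [hn [Hcont Hcv]].
  assert (Heps : forall n : nat, 0 < 1 / 2 ^ n)
    by (intro; apply Rdiv_lt_0_compat; [lra | apply pow_lt; lra]).
  exists (fun n x => hn n x * / (hn n x * hn n x + 1 / 2 ^ n)). split.
  - intro n. apply (continuous_comp X T (fun y => y * / (y * y + 1 / 2 ^ n))); [|auto].
    intro y. apply continuity_pt_mult; [apply derivable_continuous_pt; reg|].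
    apply continuity_pt_inv; [reg|]. specialize (Heps n). nra.
  - intro x. replace (/ h x) with (h x * / (h x * h x + 0)) by (field; auto).
    apply CV_mult; [auto|].
    apply (continuity_seq Rinv (fun n => hn n x * hn n x + 1 / 2 ^ n)).
    + apply continuity_pt_inv; [apply derivable_continuous_pt; reg|].
      rewrite Rplus_0_r. apply Rmult_integral_contrapositive; auto.
    + apply CV_plus; [apply CV_mult; auto | apply cv_pow_half].
Qed.

End BaireOne.

(* Encoding a sequence of reals by one number: [tseries a = sum_n 2^-n min(|a n|, 1)]. *)

Definition trunc (y : R) : R := Rmin (Rabs y) 1.

Lemma trunc_bounds y : 0 <= trunc y <= 1.
Proof. unfold trunc, Rmin. pose proof (Rabs_pos y). destruct Rle_dec; lra. Qed.

Lemma trunc_zero y : trunc y = 0 <-> y = 0.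
Proof.
  unfold trunc, Rmin. destruct Rle_dec; split; intro H; try lra.
  - destruct (Req_dec y 0) as [|Hy]; [assumption|]. apply Rabs_no_R0 in Hy; lra.
  - rewrite H, Rabs_R0; reflexivity.
  - rewrite H, Rabs_R0 in *; lra.
Qed.

Lemma trunc_continuity_pt y : continuity_pt trunc y.
Proof.
  apply lipschitz_continuity_pt. intros a b. unfold trunc, Rmin.
  pose proof (Rabs_triang_inv a b). pose proof (Rabs_triang_inv b a).
  rewrite (Rabs_minus_sym b a) in *. repeat destruct Rle_dec; split_Rabs; lra.
Qed.

Lemma scal_trunc_continuity_pt c y : continuity_pt (fun z => c * trunc z) y.
Proof.
  apply (continuity_pt_mult (fun _ => c) trunc);
    [apply continuity_pt_const; intros a b; auto | apply trunc_continuity_pt].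
Qed.

Definition wsum (a : nat -> R) (K : nat) : R := sum_f_R0 (fun n => (/2)^n * a n) K.

Section WeightedSums.
Variable a : nat -> R.
Hypothesis a_bounds : forall n, 0 <= a n <= 1.

Lemma wsum_tail N d : 0 <= wsum a (N + d) - wsum a N <= (/2)^N - (/2)^(N + d).
Proof.
  induction d as [|d IHd].
  - rewrite Nat.add_0_r. lra.
  - rewrite Nat.add_succ_r. unfold wsum in *. simpl sum_f_R0. simpl pow.
    pose proof (half_pow_pos (N + d)). destruct (a_bounds (S (N + d))).
    assert (0 <= /2 * (/2)^(N + d) * a (S (N + d)) <= /2 * (/2)^(N + d)); [|lra].
    split; [apply Rmult_le_pos; lra|].
    rewrite <- (Rmult_1_r (/2 * (/2)^(N + d))) at 2. apply Rmult_le_compat_l; lra.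
Qed.

Lemma wsum_growing : Un_growing (wsum a).
Proof. intro n. pose proof (wsum_tail n 1). rewrite Nat.add_1_r in *. lra. Qed.

Lemma wsum_has_ub : has_ub (wsum a).
Proof.
  exists 2. intros y [n ->]. pose proof (wsum_tail 0 n). unfold wsum in *. simpl in *.
  pose proof (a_bounds 0%nat). pose proof (half_pow_pos n). lra.
Qed.

Lemma wsum_term n : (/2)^n * a n <= wsum a n.
Proof.
  destruct n as [|n]; unfold wsum; simpl; [lra|].
  pose proof (wsum_tail 0 n) as Htail. unfold wsum in Htail. simpl in Htail.
  pose proof (a_bounds 0%nat). lra.
Qed.

End WeightedSums.

Lemma wsum_zero a k : (forall n, (n <= k)%nat -> a n = 0) -> wsum a k = 0.
Proof.
  intro Ha. unfold wsum. induction k as [|k IHk]; simpl.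
  - rewrite Ha by lia. ring.
  - rewrite IHk by (intros; apply Ha; lia). rewrite Ha by lia. ring.
Qed.

Definition tseries (f : nat -> R) : R :=
  proj1_sig (growing_cv (wsum (fun n => trunc (f n)))
    (wsum_growing _ (fun n => trunc_bounds (f n)))
    (wsum_has_ub _ (fun n => trunc_bounds (f n)))).

Lemma tseries_cv f : Un_cv (wsum (fun n => trunc (f n))) (tseries f).
Proof. unfold tseries. destruct growing_cv; simpl; auto. Qed.

Lemma tseries_ge f K : wsum (fun n => trunc (f n)) K <= tseries f.
Proof.
  apply growing_ineq; [apply wsum_growing; intro; apply trunc_bounds | apply tseries_cv].
Qed.

Lemma lim_le u l c : Un_cv u l -> (forall n, u n <= c) -> l <= c.
Proof.
  intros Hu Hc. destruct (Rle_dec l c) as [|Hlc]; [assumption|].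
  destruct (Hu (l - c)) as [N HN]; [lra|].
  specialize (HN N (le_n _)). specialize (Hc N). unfold Rdist in HN. split_Rabs; lra.
Qed.

Lemma tseries_tail f N : 0 <= tseries f - wsum (fun n => trunc (f n)) N <= (/2)^N.
Proof.
  pose proof (tseries_ge f N).
  assert (Hb : forall n, 0 <= trunc (f n) <= 1) by (intro; apply trunc_bounds).
  split; [lra|].
  assert (tseries f <= wsum (fun n => trunc (f n)) N + (/2)^N); [|lra].
  apply (lim_le _ _ _ (tseries_cv f)). intro K. destruct (le_lt_dec N K).
  - replace K with (N + (K - N))%nat by lia. pose proof (wsum_tail _ Hb N (K - N)).
    pose proof (half_pow_pos (N + (K - N))). lra.
  - pose proof (wsum_tail _ Hb K (N - K)) as Htail.
    replace (K + (N - K))%nat with N in Htail by lia.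
    pose proof (half_pow_pos N). lra.
Qed.

Lemma tseries_nonneg f : 0 <= tseries f.
Proof.
  pose proof (tseries_ge f 0). pose proof (trunc_bounds (f 0%nat)).
  unfold wsum in *; simpl in *. lra.
Qed.

Lemma tseries_small f k : (forall n, (n <= k)%nat -> f n = 0) -> tseries f <= (/2)^k.
Proof.
  intro Hf. pose proof (tseries_tail f k) as Htail.
  rewrite wsum_zero in Htail; [lra|].
  intros n Hn. apply trunc_zero, Hf, Hn.
Qed.

Lemma tseries_zero_iff f : tseries f = 0 <-> forall n, f n = 0.
Proof.
  split.
  - intros H n. pose proof (wsum_term _ (fun n => trunc_bounds (f n)) n).
    pose proof (tseries_ge f n). pose proof (half_pow_pos n). pose proof (trunc_bounds (f n)).
    apply trunc_zero. apply Rle_antisym; [|lra].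
    apply (Rmult_le_reg_l ((/2)^n)); lra.
  - intro H. apply Rle_antisym; [|apply tseries_nonneg].
    apply le_half_pows. intro k. apply tseries_small. auto.
Qed.

Lemma wsum_trunc_cv (phi : nat -> nat -> R) (f : nat -> R) :
  (forall n, Un_cv (fun k => phi n k) (f n)) ->
  forall N, Un_cv (fun k => wsum (fun n => trunc (phi n k)) N) (wsum (fun n => trunc (f n)) N).
Proof.
  intros Hcv N. unfold wsum. induction N as [|N IHN]; simpl.
  - apply (continuity_seq (fun z => 1 * trunc z)); [apply scal_trunc_continuity_pt | auto].
  - apply (CV_plus (fun k => sum_f_R0 (fun n => (/2)^n * trunc (phi n k)) N)
                   (fun k => /2 * (/2)^N * trunc (phi (S N) k))); [exact IHN|].
    apply (continuity_seq (fun z => /2 * (/2)^N * trunc z));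
      [apply scal_trunc_continuity_pt | auto].
Qed.

(* If [phi n k -> f n] with each [phi n k] continuous, the diagonal partial sums
   [wsum (trunc (phi n k)) k] are continuous and converge to the series. *)
Lemma B1_tseries X (T : topology X) (f : nat -> X -> R) : (forall n, Baire_one T (f n)) ->
  Baire_one T (fun x => tseries (fun n => f n x)).
Proof.
  intro Hf. destruct (choice _ Hf) as [phi Hphi].
  exists (fun k x => wsum (fun n => trunc (phi n k x)) k). split.
  - intro k. apply (continuous_sum X T (fun n x => (/2)^n * trunc (phi n k x))).
    intro n. apply (continuous_comp X T (fun z => (/2)^n * trunc z));
      [intro; apply scal_trunc_continuity_pt | apply Hphi].
  - intros x eps Heps. destruct (half_pow_small (eps / 4)) as [N HN]; [lra|].
    destruct (wsum_trunc_cv (fun n k => phi n k x) (fun n => f n x)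
                (fun n => proj2 (Hphi n) x) N (eps / 4)) as [K0 HK0]; [lra|].
    exists (max K0 N). intros k Hk. specialize (HK0 k ltac:(lia)). unfold Rdist in *.
    assert (Hb : forall n, 0 <= trunc (phi n k x) <= 1) by (intro; apply trunc_bounds).
    pose proof (wsum_tail _ Hb N (k - N)) as Htail.
    replace (N + (k - N))%nat with k in Htail by lia.
    pose proof (half_pow_pos k). pose proof (tseries_tail (fun n => f n x) N).
    split_Rabs; lra.
Qed.

Section MaximalIdeal.
Variables (X : Type) (T : topology X) (M : (X -> R) -> Prop).
Hypothesis HM : B1_maximal_ideal T M.

Lemma M_B1 f : M f -> Baire_one T f.
Proof. destruct HM as [[H _] _]; auto. Qed.

Lemma M_zero : M (fun _ => 0).
Proof. destruct HM as [[_ [H _]] _]; exact H. Qed.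

Lemma M_plus f g : M f -> M g -> M (fun x => f x + g x).
Proof. destruct HM as [[_ [_ [H _]]] _]; auto. Qed.

Lemma M_mult g f : Baire_one T g -> M f -> M (fun x => g x * f x).
Proof. destruct HM as [[_ [_ [_ H]]] _]; auto. Qed.

Lemma M_not_one : ~ M (fun _ => 1).
Proof. destruct HM as [_ [H _]]; exact H. Qed.

Lemma M_ext f g : M f -> (forall x, f x = g x) -> M g.
Proof. intros Hf Hfg. replace g with f; [exact Hf | apply functional_extensionality, Hfg]. Qed.

(* Maximality: if [f] is not in [M], then [M + B_1(X) f] contains [1]. *)
Lemma M_inverse f : Baire_one T f -> ~ M f ->
  exists m h, M m /\ Baire_one T h /\ forall x, m x + h x * f x = 1.
Proof.
  intros Hf Hnf.
  set (J := fun g => exists m h, M m /\ Baire_one T h /\ forall x, g x = m x + h x * f x).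
  assert (HJ : B1_ideal T J).
  { split; [|split; [|split]].
    - intros g [m [h [Hm [Hh Hg]]]]. apply (B1_ext _ T (fun x => m x + h x * f x));
        [apply B1_plus; [apply M_B1 | apply B1_mult] | intro]; auto.
    - exists (fun _ => 0), (fun _ => 0). split; [apply M_zero|].
      split; [apply B1_const | intro; ring].
    - intros g1 g2 [m1 [h1 [Hm1 [Hh1 Hg1]]]] [m2 [h2 [Hm2 [Hh2 Hg2]]]].
      exists (fun x => m1 x + m2 x), (fun x => h1 x + h2 x).
      split; [apply M_plus; auto|]. split; [apply B1_plus; auto|].
      intro x; rewrite Hg1, Hg2; ring.
    - intros g k Hk [m [h [Hm [Hh Hg]]]].
      exists (fun x => k x * m x), (fun x => k x * h x).
      split; [apply M_mult; auto|]. split; [apply B1_mult; auto|].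
      intro x; rewrite Hg; ring. }
  destruct HM as [_ [_ Hmax]]. destruct (Hmax J HJ) as [HJM | [m [h [Hm [Hh H1]]]]].
  - intros g Hg. exists g, (fun _ => 0). split; [auto|]. split; [apply B1_const | intro; ring].
  - exfalso. apply Hnf, HJM. exists (fun _ => 0), (fun _ => 1).
    split; [apply M_zero|]. split; [apply B1_const | intro; ring].
  - exists m, h. split; [auto|]. split; [auto|]. intro x; rewrite <- H1; reflexivity.
Qed.

Lemma M_prime u v : Baire_one T u -> Baire_one T v -> (forall x, u x * v x = 0) ->
  M u \/ M v.
Proof.
  intros Hu Hv Huv. destruct (classic (M u)) as [|Hnu]; [left; assumption|right].
  destruct (M_inverse u Hu Hnu) as [m [h [Hm [Hh H1]]]].
  apply (M_ext (fun x => v x * m x)); [apply M_mult; auto|].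
  intro x. replace (m x) with (1 - h x * u x) by (specialize (H1 x); lra).
  replace (v x * (1 - h x * u x)) with (v x - h x * (u x * v x)) by ring.
  rewrite Huv; ring.
Qed.

(* Every function of [M] has a zero: otherwise its reciprocal would give [1 ∈ M]. *)
Lemma M_has_zero f : M f -> exists x, f x = 0.
Proof.
  intro Hf. apply NNPP. intro Hn.
  assert (Hnz : forall x, f x <> 0) by (intros x Hx; apply Hn; eauto).
  apply M_not_one. apply (M_ext (fun x => / f x * f x)); [|intro x; field; auto].
  apply M_mult; [apply B1_inv; [exact Hnz | apply M_B1, Hf] | exact Hf].
Qed.

(* [Z(u) ∩ Z(v) = Z(u^2 + v^2)] is again a zero set of [M]. *)
Lemma M_sqsum u v : M u -> M v -> M (fun x => u x * u x + v x * v x).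
Proof. intros Hu Hv. apply M_plus; apply M_mult; auto using M_B1. Qed.

Lemma M_common_zero u v : M u -> M v -> exists x, u x = 0 /\ v x = 0.
Proof.
  intros Hu Hv. destruct (M_has_zero _ (M_sqsum u v Hu Hv)) as [x Hx].
  exists x. apply sqsum_zero, Hx.
Qed.

Lemma M_finite_inter (F : nat -> X -> R) : (forall n, M (F n)) ->
  forall k, exists m, M m /\ forall x, m x = 0 <-> forall n, (n <= k)%nat -> F n x = 0.
Proof.
  intros HF k. induction k as [|k [m [Hm Hmz]]].
  - exists (F O). split; [apply HF|]. intro x; split.
    + intros Hx n Hn. replace n with O by lia. exact Hx.
    + intro Hx. apply Hx; lia.
  - exists (fun x => m x * m x + F (S k) x * F (S k) x). split; [apply M_sqsum; auto|].
    intro x. rewrite sqsum_zero, Hmz. split.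
    + intros [Hle HSk] n Hn. destruct (Nat.eq_dec n (S k)) as [->|Hne]; [exact HSk|].
      apply Hle; lia.
    + intro Hx. split; [intros n Hn; apply Hx; lia | apply Hx; lia].
Qed.

Definition meets_ZB (S : X -> Prop) : Prop := forall m, M m -> exists x, S x /\ m x = 0.

Lemma M_of_meets f : Baire_one T f -> meets_ZB (Zset f) -> M f.
Proof.
  intros Hf Hmeets. apply NNPP; intro Hnf.
  destruct (M_inverse f Hf Hnf) as [m [h [Hm [Hh H1]]]].
  destruct (Hmeets m Hm) as [x [Hfx Hmx]]. specialize (H1 x). unfold Zset in Hfx.
  rewrite Hfx, Hmx in H1. lra.
Qed.

Lemma M_zero_superset u v : M u -> Baire_one T v -> (forall x, u x = 0 -> v x = 0) -> M v.
Proof.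
  intros Hu Hv Huv. apply M_of_meets; [exact Hv|]. intros m Hm.
  destruct (M_common_zero u m Hu Hm) as [x [Hux Hmx]]. exists x. split; [apply Huv, Hux | exact Hmx].
Qed.

(* (1) => (3): if [tseries (fn x) - r ∈ M], finite intersections force [r <= 2^-k]
   for all [k], so [r = 0] and a zero of [tseries (fn x)] is a common zero. *)
Lemma real_cip : real_ideal T M -> ZB_countable_inter_prop M.
Proof.
  intros Hreal Zs HZs. destruct (choice _ HZs) as [fn Hfn].
  set (g := fun x => tseries (fun n => fn n x)).
  assert (Hg : Baire_one T g) by (apply B1_tseries; intro n; apply M_B1, Hfn).
  destruct (Hreal g Hg) as [r Hr].
  assert (Hr_small : forall k, r <= (/2)^k).
  { intro k. destruct (M_finite_inter fn (fun n => proj1 (Hfn n)) k) as [m [Hm Hmz]].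
    destruct (M_common_zero _ _ Hm Hr) as [x [Hmx Hgx]].
    pose proof (tseries_small (fun n => fn n x) k (proj1 (Hmz x) Hmx)). unfold g in Hgx. lra. }
  destruct (M_has_zero _ Hr) as [x Hx].
  assert (Hgx : g x = 0).
  { pose proof (le_half_pows r Hr_small). pose proof (tseries_nonneg (fun n => fn n x)).
    unfold g in *. lra. }
  exists x. intro n. apply Hfn. exact (proj1 (tseries_zero_iff _) Hgx n).
Qed.

Lemma closed_cip : ZB_closed_countable_inter M -> ZB_countable_inter_prop M.
Proof.
  intros Hclosed Zs HZs. destruct (Hclosed Zs HZs) as [h [Hh HZh]].
  destruct (M_has_zero h Hh) as [x Hx]. exists x. apply HZh. exact Hx.
Qed.

Section CountableIntersectionProperty.
Hypothesis Hcip : ZB_countable_inter_prop M.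

Lemma cip_common_zero (w : nat -> X -> R) : (forall n, M (w n)) ->
  exists x, forall n, w n x = 0.
Proof.
  intro Hw. apply (Hcip (fun n => Zset (w n))). intro n. exists (w n). split; [auto | tauto].
Qed.

Lemma cip_meets (w : nat -> X -> R) : (forall n, M (w n)) ->
  meets_ZB (fun x => forall n, w n x = 0).
Proof.
  intros Hw m Hm.
  destruct (cip_common_zero (fun n => match n with O => m | S n => w n end)) as [x Hx].
  - intros [|n]; auto.
  - exists x. split; [intro n; apply (Hx (S n)) | apply (Hx O)].
Qed.

(* (3) => (2): [Z(tseries (fn x)) = ∩ Z(fn)] meets every zero set of [M]. *)
Lemma cip_closed : ZB_closed_countable_inter M.
Proof.
  intros Zs HZs. destruct (choice _ HZs) as [fn Hfn].
  exists (fun x => tseries (fun n => fn n x)). split.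
  - apply M_of_meets; [apply B1_tseries; intro n; apply M_B1, Hfn|].
    intros m Hm. destruct (cip_meets fn (fun n => proj1 (Hfn n)) m Hm) as [x [Hx Hmx]].
    exists x. split; [exact (proj2 (tseries_zero_iff _) Hx) | exact Hmx].
  - intro x. unfold Zset. rewrite tseries_zero_iff.
    split; intros H n; apply Hfn, H.
Qed.

(* Fix [f]; cut [X] at level [r] into [{f >= r}] and [{f <= r}]. *)
Section Level.
Variable f : X -> R.
Hypothesis Hf : Baire_one T f.

Definition at_least (r : R) : X -> R := fun x => Rmin (f x - r) 0.
Definition at_most (r : R) : X -> R := fun x => Rmax (f x - r) 0.

Lemma at_least_B1 r : Baire_one T (at_least r).
Proof.
  apply (B1_comp X T (fun y => Rmin (y - r) 0)); [|exact Hf].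
  intro; apply lipschitz_continuity_pt; intros a b.
  unfold Rmin; repeat destruct Rle_dec; split_Rabs; lra.
Qed.

Lemma at_most_B1 r : Baire_one T (at_most r).
Proof.
  apply (B1_comp X T (fun y => Rmax (y - r) 0)); [|exact Hf].
  intro; apply lipschitz_continuity_pt; intros a b.
  unfold Rmax; repeat destruct Rle_dec; split_Rabs; lra.
Qed.

Lemma at_least_zero r x : at_least r x = 0 <-> r <= f x.
Proof. unfold at_least. rewrite Rmin_0_zero. lra. Qed.

Lemma at_most_zero r x : at_most r x = 0 <-> f x <= r.
Proof. unfold at_most. rewrite Rmax_0_zero. lra. Qed.

Lemma at_least_or_at_most r : M (at_least r) \/ M (at_most r).
Proof.
  apply M_prime; [apply at_least_B1 | apply at_most_B1 |].
  intro x; apply Rmin_Rmax_0_mult.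
Qed.

Lemma at_least_at_most_le a b : M (at_least a) -> M (at_most b) -> a <= b.
Proof.
  intros Ha Hb. destruct (M_common_zero _ _ Ha Hb) as [x [Hax Hbx]].
  apply at_least_zero in Hax; apply at_most_zero in Hbx. lra.
Qed.

Lemma at_least_mono a r : M (at_least a) -> r <= a -> M (at_least r).
Proof.
  intros Ha Hra. apply (M_zero_superset (at_least a)); [exact Ha | apply at_least_B1 |].
  intros x Hx. apply at_least_zero. apply at_least_zero in Hx. lra.
Qed.

Lemma not_all_at_least : ~ forall n, M (at_least (INR n)).
Proof.
  intro Hall. destruct (cip_common_zero _ Hall) as [x Hx].
  destruct (INR_unbounded (f x)) as [n Hn].
  specialize (Hx n). apply at_least_zero in Hx. lra.
Qed.

Lemma not_all_at_most : ~ forall n, M (at_most (- INR n)).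
Proof.
  intro Hall. destruct (cip_common_zero _ Hall) as [x Hx].
  destruct (INR_unbounded (- f x)) as [n Hn].
  specialize (Hx n). apply at_most_zero in Hx. lra.
Qed.

(* The level [a = sup {r | {f >= r} ∈ Z_B[M]}]: both [{f >= a - 2^-k}] and
   [{f <= a + 2^-k}] belong to [Z_B[M]] for every [k]. *)
Lemma level_exists : exists a,
  forall k, M (at_least (a - (/2)^k)) /\ M (at_most (a + (/2)^k)).
Proof.
  set (E := fun r => M (at_least r)).
  assert (HEb : bound E).
  { destruct (not_all_ex_not _ _ not_all_at_least) as [n Hn].
    exists (INR n). intros r Hr. apply (at_least_at_most_le r (INR n) Hr).
    destruct (at_least_or_at_most (INR n)); tauto. }
  assert (HEn : exists r, E r).
  { destruct (not_all_ex_not _ _ not_all_at_most) as [n Hn].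
    exists (- INR n). destruct (at_least_or_at_most (- INR n)); tauto. }
  destruct (completeness E HEb HEn) as [a [Hub Hlub]].
  exists a. intro k. pose proof (half_pow_pos k). split.
  - apply NNPP; intro Hn. assert (a <= a - (/2)^k); [|lra].
    apply Hlub. intros r Hr. destruct (Rle_dec r (a - (/2)^k)) as [|Hgt]; [assumption|].
    exfalso; apply Hn, (at_least_mono r); [exact Hr | lra].
  - destruct (at_least_or_at_most (a + (/2)^k)) as [Hl|]; [|assumption].
    exfalso. specialize (Hub _ Hl). lra.
Qed.

(* [Z(f - a) ⊇ ∩_k ({f >= a - 2^-k} ∩ {f <= a + 2^-k})] meets every zero set of [M]. *)
Lemma cip_real_at : exists a, M (fun x => f x - a).
Proof.
  destruct level_exists as [a Ha]. exists a.
  apply M_of_meets; [apply B1_minus; [exact Hf | apply B1_const]|]. intros m Hm.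
  set (w := fun k x => at_least (a - (/2)^k) x * at_least (a - (/2)^k) x +
                       at_most (a + (/2)^k) x * at_most (a + (/2)^k) x).
  destruct (cip_meets w (fun k => M_sqsum _ _ (proj1 (Ha k)) (proj2 (Ha k))) m Hm)
    as [x [Hx Hmx]].
  exists x. split; [|exact Hmx]. unfold Zset.
  assert (Hclose : forall k, Rabs (f x - a) <= (/2)^k).
  { intro k. specialize (Hx k). unfold w in Hx. apply sqsum_zero in Hx.
    destruct Hx as [Hl Hu]. apply at_least_zero in Hl; apply at_most_zero in Hu.
    split_Rabs; lra. }
  pose proof (le_half_pows _ Hclose). pose proof (Rabs_pos (f x - a)).
  destruct (Req_dec (f x - a) 0) as [|Hne]; [assumption|].
  apply Rabs_no_R0 in Hne. lra.
Qed.

End Level.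

Lemma cip_real : real_ideal T M.
Proof. exact cip_real_at. Qed.

End CountableIntersectionProperty.

End MaximalIdeal.

Theorem theorem4p26 (X : Type) (T : topology X) (M : (X -> R) -> Prop)
  (HM : B1_maximal_ideal T M) :
  (real_ideal T M <-> ZB_closed_countable_inter M) /\
  (ZB_closed_countable_inter M <-> ZB_countable_inter_prop M).
Proof.
  split; split.
  - intro Hreal. exact (cip_closed X T M HM (real_cip X T M HM Hreal)).
  - intro Hclosed. exact (cip_real X T M HM (closed_cip X T M HM Hclosed)).
  - exact (closed_cip X T M HM).
  - exact (cip_closed X T M HM).
Qed.
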